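(* For any $s,g$, every graph $G=(V,E)$ satisfying $S(s,g)$ has the following property: for every $D\subseteq V$ with $|D|\le \frac{gs}{4}$ there exists a set $Z\subseteq V$ with $|Z|\le \frac{2|D|}{s}$ such that the induced graph $G[V\setminus(D\cup Z)]$ satisfies $S\left(\frac{s}{2},\frac{g}{2}\right)$.
   Context: For a graph $H$ and $A\subseteq V(H)$, $N_H(A)$ is the set of vertices of $H$ outside $A$ having at least one neighbor in $A$. $H$ satisfies $S(s,g)$ if every $A\subseteq V(H)$ with $|A|\le g$ has $|N_H(A)|\ge s|A|$ (for an induced subgraph, neighborhoods are taken inside that subgraph). *)

(* A simple graph on a finite vertex type T is a symmetric,
   irreflexive relation e : rel T. *)
From mathcomp Require Import all_boot all_order all_algebra.
Set Implicit Arguments. Unset Strict Implicit. Unset Printing Implicit Defensive.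
Import Order.TTheory GRing.Theory Num.Theory.
Local Open Scope ring_scope.

Definition nbhd (T : finType) (e : rel T) (W A : {set T}) : {set T} :=
  [set v in W :\: A | [exists u in A, e u v]].

Definition expands (R : realFieldType) (T : finType) (e : rel T)
    (W : {set T}) (s g : R) : Prop :=
  forall A : {set T}, A \subset W -> (#|A|%:R <= g) ->
    s * #|A|%:R <= (#|nbhd e W A|)%:R.

(* Among the sets Z outside D with |Z| <= g whose neighbourhood in G - D has
   at most s|Z|/2 vertices, take one of maximum size.  Since G expands, the
   neighbourhood of Z in G has at least s|Z| vertices, and it loses at most
   |D| of them when D is deleted; hence s|Z| <= 2|D|, so |Z| <= 2|D|/s <= g/2.
   If some A outside D and Z with |A| <= g/2 had fewer than s|A|/2 neighbours
   in G - (D u Z), then Z u A would be a larger set of the same kind. *)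
From mathcomp Require Import all_boot all_order all_algebra.
From mathcomp Require Import lra.
Set Implicit Arguments. Unset Strict Implicit. Unset Printing Implicit Defensive.
Import Order.TTheory GRing.Theory Num.Theory.
Local Open Scope ring_scope.

Lemma nbhd_set0 (T : finType) (e : rel T) (W : {set T}) : nbhd e W set0 = set0.
Proof.
by apply/setP => v; rewrite !inE; apply/negbTE/nandP; right; apply/existsP => -[u]; rewrite inE.
Qed.

Lemma nbhd_subU_setD (T : finType) (e : rel T) (W D A : {set T}) :
  nbhd e W A \subset nbhd e (W :\: D) A :|: D.
Proof.
apply/subsetP => v; rewrite !inE => /andP[/andP[vA vW] uv].
by case: (v \in D); rewrite ?orbT //= vA vW uv.
Qed.

Lemma nbhd_setU_sub (T : finType) (e : rel T) (W Z A : {set T}) :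
  nbhd e W (Z :|: A) \subset nbhd e W Z :|: nbhd e (W :\: Z) A.
Proof.
apply/subsetP => v; rewrite !inE negb_or => /andP[/andP[/andP[vZ vA] vW]].
case/existsP=> u /andP[]; rewrite inE => /orP[uZ|uA] euv.
  by rewrite vZ vW /=; apply/orP; left; apply/existsP; exists u; rewrite uZ.
by rewrite vZ vA vW /=; apply/orP; right; apply/existsP; exists u; rewrite uA.
Qed.

Lemma cardsU_subsetD (T : finType) (W Z A : {set T}) :
  A \subset W :\: Z -> #|Z :|: A| = (#|Z| + #|A|)%N.
Proof.
move=> sAWZ; apply/eqP; rewrite (leq_card_setU Z A).2 disjoint_sym disjoint_subset.
by apply/subsetP => x /(subsetP sAWZ); rewrite !inE => /andP[].
Qed.

Section SparseSets.

Variables (R : realFieldType) (T : finType) (e : rel T) (s g : R).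

Definition sparse_in (W Z : {set T}) : bool :=
  [&& Z \subset W, #|Z|%:R <= g & 2 * #|nbhd e W Z|%:R <= s * #|Z|%:R].

Lemma sparse_in0 (W : {set T}) : 0 <= g -> sparse_in W set0.
Proof. by move=> g_ge0; rewrite /sparse_in sub0set nbhd_set0 cards0 !mulr0 lexx g_ge0. Qed.

Lemma card_nbhd_setU (W Z A : {set T}) :
  #|nbhd e W (Z :|: A)|%:R <= #|nbhd e W Z|%:R + #|nbhd e (W :\: Z) A|%:R :> R.
Proof.
rewrite -natrD ler_nat; apply: leq_trans (leq_card_setU _ _).
exact/subset_leq_card/nbhd_setU_sub.
Qed.

Lemma sparse_inU (W Z A : {set T}) :
  sparse_in W Z -> A \subset W :\: Z -> #|Z|%:R + #|A|%:R <= g ->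
  2 * #|nbhd e (W :\: Z) A|%:R <= s * #|A|%:R -> sparse_in W (Z :|: A).
Proof.
case/and3P=> sZW _ NZ sAWZ ZA_le_g NA.
have sAW : A \subset W by apply: subset_trans sAWZ (subsetDl _ _).
have := card_nbhd_setU W Z A.
by rewrite /sparse_in subUset sZW sAW (cardsU_subsetD sAWZ) natrD ZA_le_g /=; lra.
Qed.

Lemma sparse_in_card (W D Z : {set T}) :
  expands e W s g -> sparse_in (W :\: D) Z -> s * #|Z|%:R <= 2 * #|D|%:R.
Proof.
move=> expW /and3P[sZWD Z_le_g NZ].
have /expW/(_ Z_le_g) : Z \subset W by apply: subset_trans sZWD (subsetDl _ _).
have : #|nbhd e W Z|%:R <= #|nbhd e (W :\: D) Z|%:R + #|D|%:R :> R.
  rewrite -natrD ler_nat; apply: leq_trans (leq_card_setU _ _).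
  exact/subset_leq_card/nbhd_subU_setD.
lra.
Qed.

Lemma expands_setD_maximal_sparse (W Z : {set T}) :
  sparse_in W Z -> #|Z|%:R <= g / 2 ->
  (forall Z', sparse_in W Z' -> #|Z'| <= #|Z|)%N ->
  expands e (W :\: Z) (s / 2) (g / 2).
Proof.
move=> sparseZ Z_le_g2 Zmax A sAWZ A_le_g2.
rewrite leNgt; apply/negP => NA_lt.
have /Zmax : sparse_in W (Z :|: A) by apply: sparse_inU => //; lra.
rewrite (cardsU_subsetD sAWZ) -[X in (_ <= X)%N]addn0 leq_add2l leqn0 => /eqP A0.
by move: NA_lt; rewrite A0 mulr0 ltNge ler0n.
Qed.

End SparseSets.

Theorem lemma2p2 (R : realFieldType) (T : finType) (e : rel T) (s g : R) :
  0 < s -> 0 < g -> symmetric e -> irreflexive e ->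
  expands e [set: T] s g ->
  forall D : {set T}, #|D|%:R <= g * s / 4 ->
  exists Z : {set T},
    #|Z|%:R <= 2 * #|D|%:R / s /\
    expands e (~: (D :|: Z)) (s / 2) (g / 2).
Proof.
move=> s_gt0 g_gt0 _ _ expG D D_le.
have [Z sparseZ Zmax] :=
  arg_maxnP (fun Z : {set T} => #|Z|) (sparse_in0 e s ([set: T] :\: D) (ltW g_gt0)).
have sZ_le := sparse_in_card expG sparseZ.
exists Z; split; first by rewrite ler_pdivlMr //; lra.
rewrite setCU -setDE -setTD; apply: expands_setD_maximal_sparse sparseZ _ Zmax => //.
rewrite ler_pdivlMr // -(ler_pM2l s_gt0); nra.
Qed.
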